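(* For any real numbers $t\ge1$ and $\varepsilon>0$, let $c=t-\lfloor t\rfloor$. There exists an indivisible-goods instance in which no allocation $A$ (i.e., no set of goods of size at most $\alpha$) gives every $t$-cohesive group an average satisfaction of at least $t-1+\frac{c(1-c)}{t}+\varepsilon$; that is, for every allocation some $t$-cohesive group has average satisfaction less than this value.
   Context: Model: There is a set of agents $N=\{1,\dots,n\}$. The resource consists of indivisible goods $G=\{g_1,\dots,g_m\}$ (no cake). Each agent $i$ approves a set $G_i\subseteq G$, and her utility for a set $A\subseteq G$ is $u_i(A)=|G_i\cap A|$. A parameter $\alpha\in(0,m]$ is given; an allocation is a set $A\subseteq G$ with $|A|\le\alpha$. For a real $t>0$, $N^*\subseteq N$ is $t$-cohesive if $|N^*|\ge t n/\alpha$ and $|\bigcap_{i\in N^*}G_i|\ge t$. The average satisfaction of a group $N'\subseteq N$ with respect to $A$ is $\frac1{|N'|}\sum_{i\in N'}u_i(A)$. *)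

From HB Require Import structures.
From mathcomp Require Import all_boot all_order all_algebra.
From mathcomp Require Import reals.
Set Implicit Arguments. Unset Strict Implicit. Unset Printing Implicit Defensive.
Import Order.TTheory GRing.Theory Num.Theory.
Local Open Scope ring_scope.

(* Agents are 'I_n, goods are 'I_m; agent i approves the set G i of goods. *)

Definition utility (n m : nat) (G : 'I_n -> {set 'I_m}) (i : 'I_n)
  (A : {set 'I_m}) : nat := #|G i :&: A|.

Definition is_allocation {R : realType} (m : nat) (alpha : R)
  (A : {set 'I_m}) : Prop := (#|A|%:R <= alpha).

Definition cohesive {R : realType} (n m : nat) (G : 'I_n -> {set 'I_m})
  (alpha t : R) (S : {set 'I_n}) : Prop :=
  t * n%:R / alpha <= #|S|%:R /\ t <= #|\bigcap_(i in S) G i|%:R.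

Definition avg_sat {R : realType} (n m : nat) (G : 'I_n -> {set 'I_m})
  (A : {set 'I_m}) (S : {set 'I_n}) : R :=
  (\sum_(i in S) (utility G i A)%:R) / #|S|%:R.

From HB Require Import structures.
From mathcomp Require Import all_boot all_order all_algebra.
From mathcomp Require Import reals.
From mathcomp Require Import ring lra zify.
Import Order.TTheory GRing.Theory Num.Theory.
Set Implicit Arguments. Unset Strict Implicit. Unset Printing Implicit Defensive.

(* Write t = k + c with k = floor t >= 1 and 0 <= c < 1.  The hard instance
   has k+1 groups of k+1 goods each, and agents of k+2 kinds: for j <= k,
   y agents of kind j approve every good outside group j, and x further
   agents (kind k+1) approve every good.  With D := x + k y agents outside
   any kind-j block and alpha := t (x + (k+1) y) / D:
   - the D agents outside block j form a t-cohesive group, since they all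
     approve the k+1 >= t goods of group j;
   - alpha < k+1 once (1-c) D > t y, so an allocation has at most k goods
     and misses some group j (pigeonhole);
   - each chosen good is then approved by only D - y agents of the group
     outside block j, so its average satisfaction is at most k (D - y) / D.
   Choosing x, y so that (1-c) D is just above t y and y > k / eps makes
   this bound fall below t - 1 + c (1-c)/t + eps. *)

Lemma card_setI_sum (T : finType) (B A : {set T}) :
  #|B :&: A| = \sum_(a in A) (a \in B).
Proof.
rewrite -sum1_card big_mkcond [RHS]big_mkcond /=; apply: eq_bigr => a _.
by rewrite !inE; case: (a \in B); case: (a \in A).
Qed.

Lemma pigeonhole_missed (T : finType) (f : T -> nat) (A : {set T}) p :
  #|A| < p -> exists2 j, j < p & forall a, a \in A -> f a != j.
Proof.
move=> A_lt_p; have [covered | /allPn[j]] := boolP (all (mem (image f A)) (iota 0 p)).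
  have := uniq_leq_size (iota_uniq 0 p) (allP covered).
  by rewrite size_iota size_image leqNgt A_lt_p.
rewrite mem_iota add0n => j_lt_p /= j_missed.
exists j => // a aA; apply: contraNneq j_missed => <-; exact: image_f.
Qed.

Lemma card_block (n x y j : nat) : 0 < y -> x + j.+1 * y <= n ->
  #|[set i : 'I_n | x <= i & (i - x) %/ y == j]| = y.
Proof.
move=> y_gt0 block_le_n.
have offset_lt (r : 'I_y) : x + j * y + r < n.
  by move: (ltn_ord r) block_le_n; rewrite mulSnr; lia.
have -> : [set i : 'I_n | x <= i & (i - x) %/ y == j]
    = [set Ordinal (offset_lt r) | r : 'I_y].
  apply/setP => i; rewrite inE; apply/andP/imsetP => [[x_le_i /eqP i_div]|].
    exists (Ordinal (ltn_pmod (i - x) y_gt0)) => //; apply: val_inj => /=.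
    by rewrite /= -i_div -addnA -divn_eq subnKC.
  case=> r _ -> /=; rewrite -addnA leq_addr addKn divnMDl //.
  by rewrite divn_small ?addn0.
by rewrite card_imset ?card_ord // => r1 r2 /(congr1 val) /= /addnI /val_inj.
Qed.

Section KindApprovals.
Variables (n m : nat) (kind : 'I_n -> nat) (group : 'I_m -> nat).

Definition approvals (i : 'I_n) : {set 'I_m} := [set g | kind i != group g].

Definition kind_class (j : nat) : {set 'I_n} := [set i | kind i == j].

Lemma group_sub_common_approvals j :
  [set g | group g == j] \subset \bigcap_(i in ~: kind_class j) approvals i.
Proof.
apply/subsetP => g; rewrite inE => /eqP gj; apply/bigcapP => i.
by rewrite !inE gj.
Qed.

Lemma approvers_card j (g : 'I_m) : group g != j ->
  #|~: kind_class j :&: [set i | g \in approvals i]|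
    = #|~: kind_class j| - #|kind_class (group g)|.
Proof.
move=> gj.
have -> : [set i | g \in approvals i] = ~: kind_class (group g).
  by apply/setP => i; rewrite !inE.
have disjoint_classes : kind_class (group g) \subset ~: kind_class j.
  by apply/subsetP => i; rewrite !inE => /eqP ->.
by rewrite -setDE cardsD (setIidPr disjoint_classes).
Qed.

Lemma satisfaction_sum_missing_group j y (A : {set 'I_m}) :
  (forall g, g \in A -> group g != j /\ y <= #|kind_class (group g)|) ->
  \sum_(i in ~: kind_class j) #|approvals i :&: A|
    <= #|A| * (#|~: kind_class j| - y).
Proof.
move=> A_ok.
under eq_bigr => i _ do rewrite card_setI_sum.
rewrite exchange_big /= -sum1_card big_distrl /=.
apply: leq_sum => g /A_ok[gj y_le]; rewrite mul1n.
have -> : \sum_(i in ~: kind_class j) (g \in approvals i)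
    = #|~: kind_class j :&: [set i | g \in approvals i]|.
  by rewrite setIC card_setI_sum; under [RHS]eq_bigr do rewrite inE.
by rewrite approvers_card // leq_sub2l.
Qed.

End KindApprovals.

Section HardInstance.
Variables (k x y : nat).
Hypothesis y_gt0 : 0 < y.

Local Notation n := (x + k.+1 * y).
Local Notation m := (k.+1 * k.+1).

(* The first x agents have kind k+1, which is no group, so they approve
   everything; agent x + j y + r (r < y) has kind j. *)
Definition agent_kind (i : 'I_n) : nat := if i < x then k.+1 else (i - x) %/ y.

Definition good_group (g : 'I_m) : nat := g %/ k.+1.

Definition hard_approvals : 'I_n -> {set 'I_m} :=
  approvals agent_kind good_group.

Lemma agent_kind_class_card j : j <= k -> #|kind_class agent_kind j| = y.
Proof.
move=> j_le_k.
have -> : kind_class agent_kind j = [set i : 'I_n | x <= i & (i - x) %/ y == j].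
  apply/setP => i; rewrite !inE /agent_kind.
  by case: ltnP => // _; rewrite andFb gtn_eqF // ltnS.
by apply: card_block; rewrite // leq_add2l leq_mul2r ltnS j_le_k orbT.
Qed.

Lemma good_group_card j : j <= k -> #|[set g | good_group g == j]| = k.+1.
Proof.
move=> j_le_k.
have -> : [set g | good_group g == j] = [set g : 'I_m | 0 <= g & (g - 0) %/ k.+1 == j].
  by apply/setP => g; rewrite !inE subn0.
by apply: card_block; rewrite // leq_mul2r ltnS j_le_k orbT.
Qed.

Lemma good_group_le (g : 'I_m) : good_group g <= k.
Proof. by rewrite -ltnS ltn_divLR. Qed.

(* Any allocation of at most k goods leaves a group of x + k y agents, all
   approving k+1 common goods, with total satisfaction at most k (D - y)
   where D = x + k y (stated without subtraction). *)
Lemma hard_instance_defeats (A : {set 'I_m}) : #|A| <= k ->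
  exists S : {set 'I_n}, [/\ #|S| = x + k * y,
    k.+1 <= #|\bigcap_(i in S) hard_approvals i| &
    \sum_(i in S) utility hard_approvals i A + k * y <= k * (x + k * y)].
Proof.
move=> A_le_k.
have [j j_le_k A_misses_j] := pigeonhole_missed good_group (p := k.+1) A_le_k.
rewrite ltnS in j_le_k.
have S_card : #|~: kind_class agent_kind j| = x + k * y.
  by rewrite cardsCs setCK card_ord agent_kind_class_card // mulSnr addnA addnK.
exists (~: kind_class agent_kind j); split=> //.
  apply: leq_trans (subset_leq_card (group_sub_common_approvals _ _ j)).
  by rewrite good_group_card.
have sum_le : \sum_(i in ~: kind_class agent_kind j) #|hard_approvals i :&: A|
    <= #|A| * (x + k * y - y).
  rewrite -S_card; apply: satisfaction_sum_missing_group => g gA.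
  by rewrite A_misses_j // agent_kind_class_card ?good_group_le.
have blocks_fit : k * (x + k * y - y) + k * y <= k * (x + k * y).
  rewrite -mulnDr leq_mul2l; have [-> // | k_gt0] := posnP k.
  by rewrite subnK ?leqnn ?orbT // (leq_trans (leq_pmull y k_gt0)) ?leq_addl.
apply: leq_trans blocks_fit; rewrite leq_add2r (leq_trans sum_le) //.
by rewrite leq_mul2r A_le_k orbT.
Qed.

End HardInstance.

Local Open Scope ring_scope.

Lemma exists_nat_step (R : archiRealFieldType) (a b : R) : 0 < a -> 0 <= b ->
  exists x : nat, [/\ (0 < x)%N, b < a * x%:R & a * x%:R <= b + a].
Proof.
move=> a_gt0 b_ge0; exists (Num.truncn (b / a)).+1; split=> //.
  by rewrite -ltr_pdivrMl // mulrC truncnS_gt.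
rewrite -natr1 mulrDr mulr1 lerD2r -ler_pdivlMl //.
by rewrite [a^-1 * b]mulrC truncn_le divr_ge0 // ltW.
Qed.

(* The allocation size alpha = t (D + Y) / D stays below t + 1 - c = k + 1. *)
Lemma quota_below_next (R : realFieldType) (t c D Y : R) :
  0 < D -> t * Y < (1 - c) * D -> t * (D + Y) / D < t + 1 - c.
Proof. by move=> D_gt0 Y_small; rewrite ltr_pdivrMr //; lra. Qed.

(* The final estimate: with t = K + c, the average k (D - Y) / D is below
   t - 1 + c (1-c)/t + eps, using t - 1 + c (1-c)/t = K - K (1-c)/t. *)
Lemma avg_below_target (R : realFieldType) (K c eps D Y s : R) :
  1 <= K -> 0 <= c < 1 -> 0 < eps -> 0 < Y <= D ->
  (1 - c) * D <= (K + c) * Y + 1 -> K < eps * Y -> s <= K * D - K * Y ->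
  s / D < K + c - 1 + c * (1 - c) / (K + c) + eps.
Proof.
move=> K_ge1 /andP[c_ge0 c_lt1] eps_gt0 /andP[Y_gt0 Y_le_D] D_hi K_lt s_le.
have t_gt0 : 0 < K + c by lra.
have D_gt0 : 0 < D by lra.
have -> : K + c - 1 + c * (1 - c) / (K + c) = K - K * (1 - c) / (K + c).
  by field; lra.
rewrite ltr_pdivrMr //; apply: le_lt_trans s_le _; rewrite -subr_gt0.
have -> : (K - K * (1 - c) / (K + c) + eps) * D - (K * D - K * Y)
    = (K * (K + c) * Y + eps * (K + c) * D - K * (1 - c) * D) / (K + c).
  by field; lra.
have K_gap : K * (1 - c) * D <= K * (K + c) * Y + K.
  by move: (ler_wpM2l (ltW (lt_le_trans ltr01 K_ge1)) D_hi); lra.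
have eps_D : K < eps * (K + c) * D.
  apply: (lt_le_trans K_lt); rewrite -mulrA ler_pM2l //; nra.
by apply: divr_gt0 => //; lra.
Qed.

(* Choice of the block sizes: y > k / eps, and x minimal with
   (1-c) x > c (k+1) y, so that (1-c)(x + k y) lies in (t y, t y + 1]. *)
Lemma exists_block_sizes (R : archiRealFieldType) (k : nat) (c eps : R) :
  0 <= c < 1 -> 0 < eps ->
  exists x y : nat, [/\ (0 < x)%N, (0 < y)%N,
    (k%:R + c) * y%:R < (1 - c) * (x + k * y)%N%:R,
    (1 - c) * (x + k * y)%N%:R <= (k%:R + c) * y%:R + 1
    & k%:R < eps * y%:R].
Proof.
move=> /andP[c_ge0 c_lt1] eps_gt0.
pose y := (Num.truncn (k%:R / eps)).+1.
have k_lt_eps_y : k%:R < eps * y%:R by rewrite mulrC -ltr_pdivrMr // truncnS_gt.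
have [||x [x_gt0 x_lo x_hi]] := @exists_nat_step _ (1 - c) (c * k.+1%:R * y%:R).
- by lra.
- by rewrite !mulr_ge0.
exists x, y; split=> //; rewrite natrD natrM -natr1 in x_lo x_hi *; lra.
Qed.

Lemma floor_truncn (R : archiRealFieldType) (t : R) :
  0 <= t -> (Num.floor t)%:~R = (Num.truncn t)%:R :> R.
Proof.
move=> t_ge0; rewrite truncn_floor t_ge0 -[in LHS](gez0_abs (m := Num.floor t)) //.
by rewrite floor_ge0.
Qed.

Theorem mainTheorem20 (R : realType) (t eps : R) :
  1 <= t -> 0 < eps ->
  let c := t - (Num.floor t)%:~R in
  exists (n m : nat) (G : 'I_n -> {set 'I_m}) (alpha : R),
    (0 < n)%N /\ 0 < alpha /\ alpha <= m%:R /\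
    forall A : {set 'I_m}, is_allocation alpha A ->
      exists S : {set 'I_n},
        cohesive G alpha t S /\
        avg_sat G A S < t - 1 + c * (1 - c) / t + eps.
Proof.
move=> t_ge1 eps_gt0 c; have t_ge0 : 0 <= t by apply: le_trans t_ge1.
set k := Num.truncn t; have k_ge1 : (1 <= k)%N by rewrite truncn_gt0.
have t_split : t = k%:R + c by rewrite /c floor_truncn //; lra.
have c_itv : 0 <= c < 1.
  by have := truncn_itv t_ge0; rewrite -natr1 -/k; lra.
have [x [y [x_gt0 y_gt0 D_lo D_hi k_lt_eps_y]]] := exists_block_sizes k c_itv eps_gt0.
rewrite -t_split in D_lo.
pose D := (x + k * y)%N; have D_gt0 : 0 < D%:R :> R by rewrite ltr0n addn_gt0 x_gt0.
have tn_gt0 : 0 < t * (x + k.+1 * y)%N%:R.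
  by rewrite mulr_gt0 ?ltr0n ?addn_gt0 ?x_gt0 //; lra.
pose alpha := t * (x + k.+1 * y)%N%:R / D%:R.
have alpha_lt : alpha < k.+1%:R.
  have -> : k.+1%:R = t + 1 - c :> R by rewrite -natr1 t_split; lra.
  by rewrite /alpha mulSnr addnA natrD; exact: quota_below_next.
exists (x + k.+1 * y)%N, (k.+1 * k.+1)%N, (@hard_approvals k x y), alpha.
split; first by rewrite addn_gt0 x_gt0.
split; first exact: divr_gt0.
split; first by rewrite (le_trans (ltW alpha_lt)) // ler_nat leq_pmulr.
move=> A A_alloc; have A_le_k : (#|A| <= k)%N.
  by rewrite -ltnS -(ltr_nat R); exact: le_lt_trans A_alloc alpha_lt.
have [S [S_card common_ge sum_le]] := hard_instance_defeats x y_gt0 A_le_k.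
exists S; split; first split.
- by rewrite S_card /alpha divKf ?lt0r_neq0.
- by rewrite (le_trans (ltW (truncnS_gt t))) // ler_nat.
rewrite /avg_sat S_card -natr_sum t_split; apply: (avg_below_target (Y := y%:R)) => //.
- by rewrite ler1n.
- by rewrite ltr0n ler_nat y_gt0 (leq_trans (leq_pmull y k_ge1)) ?leq_addl.
- by rewrite lerBrDr -!natrM -natrD ler_nat.
Qed.
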